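(* Let $p<q$ be odd primes. Then $n=pq$ is a $G$-Lehmer number if and only if $q=p+2$ and $8$ divides $p+q$.
   Context: For a positive integer $n$, $\mathcal{G}_n=\{a+bi\in\mathbb{Z}[i]/n\mathbb{Z}[i] : a^2+b^2\equiv 1\pmod n\}$ and $\Phi(n)=|\mathcal{G}_n|$. The function $\mathcal{F}$ is defined by $\mathcal{F}(n)=n-1$ if $n\equiv 1\pmod 4$, $\mathcal{F}(n)=n+1$ if $n\equiv 3 \pmod 4$, $\mathcal{F}(n)=n$ otherwise. A composite number $n$ is a $G$-Lehmer number if $\Phi(n)$ divides $\mathcal{F}(n)$. *)

From mathcomp Require Import all_boot.
Set Implicit Arguments. Unset Strict Implicit. Unset Printing Implicit Defensive.

(* G_n = { a + b i in Z[i]/nZ[i] : a^2 + b^2 = 1 (mod n) }, elements represented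
   by pairs (a, b) with 0 <= a, b < n. *)
Definition Gn (n : nat) : {set 'I_n * 'I_n} :=
  [set x : 'I_n * 'I_n | (x.1 ^ 2 + x.2 ^ 2 == 1 %[mod n])].

Definition Phi (n : nat) : nat := #|Gn n|.

Definition Fn (n : nat) : nat :=
  if n %% 4 == 1 then n - 1 else if n %% 4 == 3 then n + 1 else n.

Definition composite (n : nat) : bool := (1 < n) && ~~ prime n.

Definition G_Lehmer (n : nat) : bool := composite n && (Phi n %| Fn n).

(* The proof computes Phi on primes and shows that it is multiplicative.
   - Over a finite field F of odd order, the conic x^2 + y^2 = 1 is rational:
     the stereographic projection from (-1, 0) puts its other points in
     bijection with the t such that 1 + t^2 != 0.  Hence its number of points
     plus the number of square roots of -1 equals |F| + 1.  Since -1 is a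
     square exactly when |F| = 1 (mod 4), with two roots then, the conic has
     |F| - 1 points if |F| = 1 (mod 4) and |F| + 1 points if |F| = 3 (mod 4),
     i.e. exactly Fn |F| points.
   - For an odd prime p, G_p is that conic over F_p, so Phi p = Fn p; by the
     Chinese remainder theorem Phi (p * q) = Phi p * Phi q for coprime p, q.
   - The theorem then reduces to the arithmetic statement that, for odd
     3 <= p < q, Fn p * Fn q divides Fn (p * q) iff q = p + 2 and 8 | p + q;
     this is settled by comparing sizes, as both sides are within a factor 2. *)

From mathcomp Require Import all_boot all_algebra finfield.
From mathcomp Require Import ring zify.
Import GRing.Theory.
Set Implicit Arguments. Unset Strict Implicit. Unset Printing Implicit Defensive.

Section FiniteFieldCircle.
Local Open Scope ring_scope.
Variable F : finFieldType.
Hypothesis two_nz : (2 : F) != 0.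

Definition circle : {set F * F} := [set x | x.1 ^+ 2 + x.2 ^+ 2 == 1].
Definition sqrt_m1 : {set F} := [set t | t ^+ 2 == -1].

(* Stereographic projection from (-1, 0) and its rational inverse. *)
Definition stereo_inv (t : F) : F * F :=
  ((1 - t ^+ 2) / (1 + t ^+ 2), 2 * t / (1 + t ^+ 2)).
Definition stereo (x : F * F) : F := x.2 / (1 + x.1).

Lemma stereo_invK t : 1 + t ^+ 2 != 0 -> stereo (stereo_inv t) = t.
Proof.
move=> ht; rewrite /stereo /stereo_inv /=.
have -> : 1 + (1 - t ^+ 2) / (1 + t ^+ 2) = 2 / (1 + t ^+ 2) by field.
by field; rewrite ht two_nz.
Qed.

Lemma circle_param :
  circle :\ (-1, 0) = stereo_inv @: [set t | 1 + t ^+ 2 != 0].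
Proof.
apply/setP => [[x y]]; rewrite !inE /=; apply/idP/imsetP.
- case/andP=> hne hC.
  have hx : 1 + x != 0.
    apply: contra hne => /eqP hx.
    have xe : x = -1 by rewrite -(addKr 1 x) hx addr0.
    move: hC; rewrite xe sqrrN expr1n -{2}(addr0 1) => /eqP/addrI/eqP.
    by rewrite sqrf_eq0 => /eqP ->.
  have hy2 : y ^+ 2 = 1 - x ^+ 2 by rewrite -(eqP hC) addrC addKr.
  have ht2 : 1 + stereo (x, y) ^+ 2 = 2 / (1 + x).
    by rewrite /stereo /= expr_div_n hy2; field; rewrite hx.
  exists (stereo (x, y)); first by rewrite inE ht2 mulf_neq0 // invr_eq0.
  rewrite /stereo_inv.
  have -> : 1 - stereo (x, y) ^+ 2 = 2 - (1 + stereo (x, y) ^+ 2) by ring.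
  rewrite ht2 /stereo /=.
  by congr (_, _); field; rewrite hx two_nz.
- case=> t; rewrite inE => ht [-> ->]; apply/andP; split; last first.
    by apply/eqP; field; rewrite ht.
  apply/negP => /eqP [] /(congr1 (fun z => z * (1 + t ^+ 2))).
  rewrite divfK // => ht1.
  have two_sum : (2 : F) = (1 - t ^+ 2) + (1 + t ^+ 2) by ring.
  by move: two_nz; rewrite two_sum ht1 mulN1r addNr eqxx.
Qed.

Lemma card_circle : (#|circle| + #|sqrt_m1| = #|F| + 1)%N.
Proof.
have m1C : (-1, 0) \in circle by rewrite inE /= expr0n addr0 sqrrN expr1n.
have -> : sqrt_m1 = ~: [set t | 1 + t ^+ 2 != 0].
  by apply/setP => t; rewrite !inE negbK addrC addr_eq0.
rewrite (cardsD1 (-1, 0)) m1C circle_param card_in_imset.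
  by rewrite -(cardsC [set t | 1 + t ^+ 2 != 0]) -addnA addnC.
by move=> t1 t2; rewrite !inE => h1 h2 e; rewrite -(stereo_invK h1) -(stereo_invK h2) e.
Qed.

Lemma unit_fermat (a : F) : a != 0 -> a ^+ #|F|.-1 = 1.
Proof.
move=> a0; apply: (mulIf a0); rewrite mul1r -exprSr prednK ?expf_card //.
by apply/card_gt0P; exists 0.
Qed.

Lemma one_neq_m1 : (1 : F) != -1.
Proof. by apply: contra two_nz => /eqP h; rewrite -[2]/(1 + 1 : F) {1}h addNr. Qed.

(* If |F| = 3 (mod 4), then t^2 = -1 would give t^(|F|-1) = -1. *)
Lemma sqrt_m1_3mod4 : (#|F| %% 4 = 3)%N -> sqrt_m1 = set0.
Proof.
move=> h4; apply/setP => t; rewrite !inE; apply/negP => /eqP ht.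
have t0 : t != 0.
  by apply/eqP => t0; move/eqP: ht; rewrite t0 expr0n eq_sym oppr_eq0 oner_eq0.
have e : (#|F|.-1 = 2 * (2 * (#|F| %/ 4)).+1)%N by have := divn_eq #|F| 4; lia.
have := unit_fermat t0; rewrite e exprM ht exprS exprM sqrrN !expr1n mulr1.
by move=> /eqP; rewrite eq_sym (negbTE one_neq_m1).
Qed.

(* An exponent 0 < k < |F| - 1 does not kill all nonzero elements, since
   X^k - 1 has at most k roots. *)
Lemma exists_non_unity_root (k : nat) :
  (0 < k < #|F|.-1)%N -> exists2 a : F, a != 0 & a ^+ k != 1.
Proof.
case/andP=> k0 kF; apply/exists_inP; apply: contraLR kF => /exists_inPn all1.
rewrite -leqNgt.
have <- : #|[pred x : F | x != 0]| = #|F|.-1 by rewrite cardC1.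
rewrite cardE; apply: max_unity_roots k0 _ (enum_uniq _).
apply/allP => x; rewrite mem_enum => x0.
by rewrite unity_rootE; apply/negPn; apply: all1.
Qed.

(* If |F| = 1 (mod 4), then t = a^((|F|-1)/4) is a square root of -1 for
   any a with a^((|F|-1)/2) != 1, and the square roots of -1 are exactly +-t. *)
Lemma sqrt_m1_1mod4 : (#|F| %% 4 = 1)%N -> #|sqrt_m1| = 2%N.
Proof.
move=> h4; set m := (#|F| %/ 4)%N.
have F1 : (1 < #|F|)%N := finNzRing_gt1 F.
have e : (#|F|.-1 = 2 * (2 * m))%N by have := divn_eq #|F| 4; rewrite h4 /m; lia.
have [a a0 ah] : exists2 a : F, a != 0 & a ^+ (2 * m) != 1.
  by apply: exists_non_unity_root; have := divn_eq #|F| 4; rewrite h4 -/m; lia.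
have am : a ^+ (2 * m) = -1.
  have := unit_fermat a0; rewrite e [(2 * (2 * m))%N]mulnC exprM => /eqP.
  by rewrite sqrf_eq1 (negbTE ah) => /eqP.
set t := a ^+ m.
have t_sq : t ^+ 2 = -1 by rewrite /t -exprM mulnC.
have -> : sqrt_m1 = [set t; -t] by apply/setP => u; rewrite !inE -t_sq eqf_sqr.
rewrite cards2; suff -> : t != -t by [].
apply/negP => /eqP htt.
have /eqP : t *+ 2 = 0 by rewrite mulr2n {2}htt addrN.
rewrite -mulr_natl mulf_eq0 (negbTE two_nz) => /eqP t0.
by move: t_sq; rewrite t0 expr0n => /eqP; rewrite eq_sym oppr_eq0 oner_eq0.
Qed.

Lemma card_circle_Fn : odd #|F| -> #|circle| = Fn #|F|.
Proof.
move=> oddF; have := card_circle; rewrite /Fn.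
have [h4|h4] : (#|F| %% 4 = 1 \/ #|F| %% 4 = 3)%N.
  by have := modn2 #|F|; rewrite oddF; lia.
- by rewrite sqrt_m1_1mod4 // h4 /=; lia.
- by rewrite sqrt_m1_3mod4 // cards0 h4 /=; lia.
Qed.

End FiniteFieldCircle.

Lemma Fp_nat_eq p (a b : nat) :
  prime p -> ((a%:R : 'F_p) == b%:R)%R = (a == b %[mod p]).
Proof.
move=> pr; apply/eqP/eqP => [h|h].
  by have := congr1 val h; rewrite /= !val_Fp_nat.
by apply: val_inj; rewrite /= !val_Fp_nat.
Qed.

Lemma Phi_prime_circle p : prime p -> Phi p = #|circle 'F_p|.
Proof.
move=> pr.
pose to_I (x : 'F_p * 'F_p) : 'I_p * 'I_p :=
  (cast_ord (Fp_cast pr) x.1, cast_ord (Fp_cast pr) x.2).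
have to_I_circle x : (to_I x \in Gn p) = (x \in circle 'F_p).
  case: x => [x1 x2]; rewrite !inE /=.
  rewrite -[x1 in RHS]natr_Zp -[x2 in RHS]natr_Zp -!natrX -natrD.
  by rewrite -[(1 : 'F_p)%R]/(1%:R)%R Fp_nat_eq.
have to_I_inj : injective to_I.
  by move=> [a1 a2] [b1 b2] [h1 h2]; rewrite (ord_inj h1) (ord_inj h2).
rewrite /Phi -(card_imset _ to_I_inj); suff -> : Gn p = to_I @: circle 'F_p by [].
apply/setP => y; apply/idP/imsetP => [hy|[x hx ->]]; last by rewrite to_I_circle.
exists (cast_ord (esym (Fp_cast pr)) y.1, cast_ord (esym (Fp_cast pr)) y.2).
  by rewrite -to_I_circle /to_I /= !cast_ordKV; case: y hy.
by rewrite /to_I /= !cast_ordKV; case: y {hy}.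
Qed.

Lemma odd_prime_ge3 p : prime p -> odd p -> (3 <= p)%N.
Proof. by move=> pr op; have := prime_gt1 pr; case: p pr op => [|[|[|p]]]. Qed.

Lemma Phi_odd_prime p : prime p -> odd p -> Phi p = Fn p.
Proof.
move=> pr op; rewrite Phi_prime_circle // -[in RHS](card_Fp pr).
apply: card_circle_Fn; last by rewrite card_Fp.
rewrite -[(2 : 'F_p)%R]/(2%:R)%R -[(0 : 'F_p)%R]/(0%:R)%R Fp_nat_eq //.
by rewrite mod0n modn_small //; have := odd_prime_ge3 pr op; lia.
Qed.

Lemma sum_sq_modn (a b d : nat) :
  ((a %% d) ^ 2 + (b %% d) ^ 2 == 1 %[mod d]) = (a ^ 2 + b ^ 2 == 1 %[mod d]).
Proof. by rewrite -modnDm !modnXm modnDm. Qed.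

(* Phi is multiplicative: by the Chinese remainder theorem, reduction modulo
   p and q is a bijection from G_(pq) onto G_p x G_q. *)
Lemma Phi_mul p q : coprime p q -> (0 < p)%N -> (0 < q)%N ->
  Phi (p * q) = (Phi p * Phi q)%N.
Proof.
move=> co p0 q0; have pq0 : (0 < p * q)%N by rewrite muln_gt0 p0.
pose red (x : 'I_(p * q) * 'I_(p * q)) :=
  ((Ordinal (ltn_pmod x.1 p0), Ordinal (ltn_pmod x.2 p0)),
   (Ordinal (ltn_pmod x.1 q0), Ordinal (ltn_pmod x.2 q0))).
have red_inj : injective red.
  have crt (a b : 'I_(p * q)) : a %% p = b %% p -> a %% q = b %% q -> a = b.
    move=> ea eb; apply: val_inj => /=.
    have : a == b %[mod p * q] by rewrite chinese_remainder // ea eb !eqxx.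
    by rewrite !modn_small // => /eqP.
  by move=> [x1 x2] [y1 y2] [e1 e2 e3 e4]; rewrite (crt _ _ e1 e3) (crt _ _ e2 e4).
rewrite /Phi -cardsX -(card_imset _ red_inj).
suff -> : setX (Gn p) (Gn q) = red @: Gn (p * q) by [].
apply/setP => [[[a1 a2] [b1 b2]]]; rewrite !inE /=; apply/idP/imsetP.
  case/andP => ha hb.
  pose lift a b := Ordinal (ltn_pmod (chinese p q a b) pq0).
  have lift_p a b : a < p -> lift a b %% p = a.
    by move=> ap; rewrite modn_dvdm ?dvdn_mulr // chinese_modl // modn_small.
  have lift_q a b : b < q -> lift a b %% q = b.
    by move=> bq; rewrite modn_dvdm ?dvdn_mull // chinese_modr // modn_small.
  exists (lift a1 b1, lift a2 b2).
    rewrite inE /= chinese_remainder // -(sum_sq_modn _ _ p) -(sum_sq_modn _ _ q).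
    by rewrite !lift_p // !lift_q // ha hb.
  by congr ((_, _), (_, _)); apply: val_inj; rewrite /= ?lift_p ?lift_q.
case=> [[x1 x2]]; rewrite inE /= chinese_remainder // => /andP[hp hq] [-> -> -> ->].
by rewrite /= sum_sq_modn hp sum_sq_modn hq.
Qed.

Lemma dvdn_lt_double a b : (0 < b)%N -> (b < 2 * a)%N -> (a %| b) = (a == b).
Proof.
move=> b0 b2; apply/idP/eqP => [/dvdnP[k e]|->//]; subst b.
by case: k b0 b2 => [|[|k]]; nia.
Qed.

Lemma Fn_mul_dvd p q : odd p -> odd q -> (3 <= p)%N -> (p < q)%N ->
  (Fn p * Fn q %| Fn (p * q)) = (q == p + 2) && (8 %| p + q).
Proof.
move=> op oq p3 pq.
have mod4 n : odd n -> n %% 4 = 1 \/ n %% 4 = 3.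
  by move=> on; have := modn2 n; rewrite on; lia.
have q2 : (p + 2 <= q)%N by have := modn2 p; have := modn2 q; rewrite op oq; lia.
rewrite /Fn -modnMm.
case: (mod4 p op) => hp; case: (mod4 q oq) => hq; rewrite hp hq /=.
- rewrite (_ : q == p + 2 = false); last by apply/negbTE/eqP; lia.
  clear -p3 q2; rewrite dvdn_lt_double; [|nia|nia].
  by apply/negbTE/eqP; nia.
- rewrite (_ : (q == p + 2) && (8 %| p + q) = false); last first.
    by apply/negbTE/negP => /andP[/eqP e /dvdnP[k]]; lia.
  clear -p3 q2; rewrite dvdn_lt_double; [|nia|nia].
  by apply/negbTE/eqP; nia.
- have [-> {q2 hq oq pq}|ne] := eqVneq q (p + 2).
    rewrite (_ : 8 %| p + (p + 2)); last by apply/dvdnP; exists (p %/ 4 + 1); lia.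
    clear -p3; rewrite dvdn_lt_double; [|nia|nia].
    by rewrite /=; apply/eqP; nia.
  have q3 : (p + 3 <= q)%N by move/eqP: ne; lia.
  rewrite /=; clear -p3 q3; rewrite dvdn_lt_double; [|nia|nia].
  by apply/negbTE/eqP; nia.
- rewrite (_ : q == p + 2 = false) ?andFb; last by apply/negbTE/eqP; lia.
  by clear -p3 q2; rewrite gtnNdvd //; nia.
Qed.

Lemma composite_mul p q : (1 < p)%N -> (1 < q)%N -> composite (p * q).
Proof.
move=> p1 q1; rewrite /composite; apply/andP; split; first by nia.
by apply/negP => /primeP[_ /(_ p (dvdn_mulr q (dvdnn p)))]; nia.
Qed.

Theorem mainTheorem14 (p q : nat) :
  prime p -> prime q -> odd p -> odd q -> p < q ->
  G_Lehmer (p * q) = (q == p + 2) && (8 %| p + q).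
Proof.
move=> pp pq op oq lt.
have p3 := odd_prime_ge3 pp op.
have co : coprime p q by rewrite prime_coprime // dvdn_prime2 //; apply/eqP; lia.
rewrite /G_Lehmer composite_mul ?prime_gt1 // Phi_mul ?prime_gt0 //.
by rewrite !Phi_odd_prime // Fn_mul_dvd.
Qed.
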